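(* Let $1\le q<p<\infty$ and $z>m_{p,q}$ with $z^*=(z^q,1)\in\mathcal J_p$. Then $$\inf\{\Lambda_p^*(t_1,t_2):\ t_1,t_2>0,\ t_1^{1/q}t_2^{-1/p}=z\}=\Lambda_p^*(z^* ),$$ and $z^*$ is the unique point of the set $\{(t_1,t_2):t_1,t_2>0,\ t_1^{1/q}t_2^{-1/p}=z\}$ at which this infimum is attained.
   Context: Let $f_p(x)=\frac{1}{2p^{1/p}\Gamma(1+1/p)}e^{-|x|^p/p}$, $m_{p,q}=(\int_{\mathbb R}|x|^qf_p(x)dx)^{1/q}$. For $\tau\in\mathbb R^2$, $\Lambda_p(\tau)=\log\int_{\mathbb R}e^{\tau_1|y|^q+\tau_2|y|^p}f_p(y)\,dy$, finite exactly on $\mathcal D_p=\mathbb R\times(-\infty,1/p)$; $\Lambda_p^*(x)=\sup_{\tau\in\mathbb R^2}(\langle x,\tau\rangle-\Lambda_p(\tau))$. $\mathcal J_p$ is the set of $x\in\mathbb R^2$ for which there exists (a unique) $\tau(x)\in\mathcal D_p$ with $\nabla_\tau\Lambda_p(\tau(x))=x$. *)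

From HB Require Import structures.
From mathcomp Require Import all_boot all_order all_algebra.
From mathcomp Require Import all_classical all_reals all_analysis.
Set Implicit Arguments. Unset Strict Implicit. Unset Printing Implicit Defensive.
Import Order.TTheory GRing.Theory Num.Theory.
Import numFieldNormedType.Exports.
Local Open Scope classical_set_scope.
Local Open Scope ring_scope.

Definition Gamma_fn {R : realType} (s : R) : R :=
  Rintegral lebesgue_measure `]0, +oo[%classic (fun t : R => t `^ (s - 1) * expR (- t)).

Definition f_p {R : realType} (p : R) (x : R) : R :=
  expR (- (`|x| `^ p) / p) / (2 * p `^ p^-1 * Gamma_fn (1 + p^-1)).

Definition m_pq {R : realType} (p q : R) : R :=
  (Rintegral lebesgue_measure [set: R] (fun x : R => `|x| `^ q * f_p p x)) `^ q^-1.

Definition mgf_p {R : realType} (p q : R) (tau : R * R) : \bar R :=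
  (\int[lebesgue_measure]_(y in [set: R])
     (expR (tau.1 * `|y| `^ q + tau.2 * `|y| `^ p) * f_p p y)%:E)%E.

Definition Lambda_p {R : realType} (p q : R) (tau : R * R) : \bar R :=
  if mgf_p p q tau \is a fin_num then (ln (fine (mgf_p p q tau)))%:E else +oo%E.

Definition D_p {R : realType} (p : R) : set (R * R) :=
  [set tau | tau.2 < p^-1].

Definition Lambda_p_star {R : realType} (p q : R) (x : R * R) : \bar R :=
  ereal_sup [set ((x.1 * tau.1 + x.2 * tau.2)%:E - Lambda_p p q tau)%E | tau in [set: R * R]].

(* real-valued version of Lambda_p (agrees with Lambda_p on D_p) *)
Definition Lambda_p_real {R : realType} (p q : R) (tau : R * R) : R :=
  fine (Lambda_p p q tau).

Definition grad_Lambda_p_eq {R : realType} (p q : R) (tau x : R * R) : Prop :=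
  differentiable (Lambda_p_real p q) tau /\
  'D_(1, 0) (Lambda_p_real p q) tau = x.1 /\
  'D_(0, 1) (Lambda_p_real p q) tau = x.2.

Definition J_p {R : realType} (p q : R) : set (R * R) :=
  [set x | exists tau, D_p p tau /\ grad_Lambda_p_eq p q tau x].

Definition constr_set {R : realType} (p q z : R) : set (R * R) :=
  [set t | 0 < t.1 /\ 0 < t.2 /\ t.1 `^ q^-1 * t.2 `^ (- p^-1) = z].

From HB Require Import structures.
From mathcomp Require Import all_boot all_order all_algebra.
From mathcomp Require Import all_classical all_reals all_analysis.
From mathcomp Require Import measurable_realfun ring lra.
Import Order.TTheory GRing.Theory Num.Theory.
Import numFieldNormedType.Exports.
Local Open Scope classical_set_scope.
Local Open Scope ring_scope.

(* The dilation y |-> l y of the density f_p acts on the tilt parameters tau,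
   and the change of variables formula turns it into an explicit identity for
   the moment generating function (mgf_dilation), hence for Lambda_p
   (Lambda_dilation) and an inequality for its Legendre transform
   (Lambda_star_dilation).  Applied with l = t2^(-1/p) and l = t2^(1/p) it
   shows that along C_z
       Lambda_p^*(t) = Lambda_p^*(z* ) + (t2 - 1 - ln t2) / p,
   and t2 - 1 - ln t2 >= 0 vanishes only at t2 = 1.  Uniqueness needs
   Lambda_p^*(z* ) to be finite: as z* is a gradient of Lambda_p at some tau,
   the mgf is finite at tau, and log-convexity of the mgf together with the
   tangent inequality for convex functions shows that the supremum defining
   Lambda_p^*(z* ) is attained at tau (Lambda_star_grad).  The same gradient
   hypothesis also rules out a degenerate normalising constant of f_p. *)

Local Notation mu := lebesgue_measure.

Lemma expR_convex {R : realType} (u v h : R) : 0 <= h <= 1 ->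
  expR ((1 - h) * u + h * v) <= (1 - h) * expR u + h * expR v.
Proof.
move=> /andP[h0 h1]; have := convex_expR (Itv01 h0 h1) v u.
by rewrite !convRE /= /unstable.onem addrC [_ + h * expR v]addrC.
Qed.

Lemma expR_interpolation {R : realType} (A B a b h : R) :
  0 < a -> 0 < b -> 0 <= h <= 1 ->
  expR ((1 - h) * A + h * B) <=
  expR ((1 - h) * ln a + h * ln b) * ((1 - h) * expR A / a + h * expR B / b).
Proof.
move=> a_gt0 b_gt0 h01.
have -> : (1 - h) * A + h * B =
    ((1 - h) * (A - ln a) + h * (B - ln b)) + ((1 - h) * ln a + h * ln b) by ring.
rewrite expRD mulrC ler_pM2l ?expR_gt0 //.
have := expR_convex (A - ln a) (B - ln b) h h01.
by rewrite !expRD !expRN !lnK ?posrE // !mulrA.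
Qed.

Lemma powR_le1 {R : realType} (a r : R) : 0 <= a <= 1 -> 0 <= r -> a `^ r <= 1.
Proof.
move=> /andP[a0 a1] r0; apply: (@le_trans _ _ (1 `^ r)); last by rewrite powR1.
by apply: ge0_ler_powR; rewrite ?nnegrE.
Qed.

Lemma powR_invrK {R : realType} (u r : R) :
  0 <= u -> 0 < r -> (u `^ r^-1) `^ r = u.
Proof. by move=> u_ge0 r_gt0; rewrite -powRrM mulVf ?gt_eqF // powRr1. Qed.

Lemma ln_le_subr1 {R : realType} (u : R) : 0 < u -> ln u <= u - 1.
Proof.
by move=> u_gt0; have := expR_ge1Dx (ln u); rewrite lnK ?posrE // lerBrDl.
Qed.

Lemma ln_eq_subr1 {R : realType} (u : R) : 0 < u -> ln u = u - 1 -> u = 1.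
Proof.
move=> u_gt0 lnu; have [/eqP|ln_neq0] := eqVneq (ln u) 0.
  by rewrite ln_eq0 // => /eqP.
by have := expR_gt1Dx ln_neq0; rewrite lnK ?posrE // lnu addrC subrK ltxx.
Qed.

Lemma pairZD {R : realType} (h : R) (v t : R * R) :
  h *: v + t = (h * v.1 + t.1, h * v.2 + t.2).
Proof. by case: v t => ? ? [? ?]. Qed.

Section lebesgue_dilation.
Variables (R : realType) (l : R).
Hypothesis l_gt0 : 0 < l.

Let dil (x : R) : measurableTypeR R := l * x.

Let measurable_dil : measurable_fun [set: R] dil.
Proof. by apply: measurable_funM => //; exact: measurable_cst. Qed.

Let dil_preimage_itv (a b : R) :
  dil @^-1` `]a, b]%classic = `](a / l), (b / l)]%classic.
Proof.
by apply/seteqP; split => x /=; rewrite !in_itv /= ltr_pdivrMr // ler_pdivlMr //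
  [x * l]mulrC.
Qed.

(* The image of Lebesgue measure under x |-> l x is l^-1 times Lebesgue
   measure; both sides are measures agreeing on half-open intervals. *)
Lemma lebesgue_measure_dilation (A : set R) : measurable A ->
  (pushforward mu dil A = (l^-1)%:E * mu A)%E.
Proof.
move=> mA; have l_ge0 : 0 <= l by exact: ltW.
suff -> : mu A = (l%:E * pushforward mu dil A)%E.
  by rewrite muleA -EFinM mulVf ?gt_eqF // mul1e.
rewrite -[X in (X * _)%E]/((NngNum l_ge0)%:num%:E).
apply: (@lebesgue_measure_unique R (mscale (NngNum l_ge0) (pushforward mu dil)))
  => // _ [[a b]] _ <-.
change (mu `]a, b]%classic = (l%:E * mu (dil @^-1` `]a, b]%classic))%E).
rewrite dil_preimage_itv !lebesgue_measure_itv /= !lte_fin.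
rewrite ltr_pM2r ?invr_gt0 //; case: ifP => _; last by rewrite mule0.
rewrite -!EFinD -EFinM; congr (_%:E).
by rewrite mulrBr ![l * (_ / l)]mulrC !divfK ?gt_eqF.
Qed.

Lemma ge0_integral_dilation (G : R -> R) : measurable_fun [set: R] G ->
  (forall x, 0 <= G x) ->
  (\int[mu]_x (G (l * x))%:E = (l^-1)%:E * \int[mu]_x (G x)%:E)%E.
Proof.
move=> mG G_ge0; have li : 0 <= l^-1 by rewrite invr_ge0 ltW.
have mGE : measurable_fun [set: R] (EFin \o G) by exact/measurable_EFinP.
transitivity (\int[pushforward mu dil]_(y in [set: R]) (G y)%:E)%E.
  by rewrite ge0_integral_pushforward // => y _; rewrite lee_fin.
transitivity (\int[mscale (NngNum li) mu]_(y in [set: R]) (G y)%:E)%E.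
  by apply: eq_measure_integral => A mA _; exact: lebesgue_measure_dilation.
by rewrite ge0_integral_mscale // => y _; rewrite lee_fin.
Qed.

End lebesgue_dilation.

Section directional_derivative.
Context {R : realType} {V : normedModType R}.

Lemma derive_le_quotient (f : V -> R) (a v : V) (B : R) : derivable f a v ->
  (forall h : R, 0 < h < 1 -> h^-1 * (f (h *: v + a) - f a) <= B) ->
  'D_v f a <= B.
Proof.
move=> df hB; rewrite /derive cvg_at_rightE //.
apply: limr_le.
  by move: df => /cvg_ex[l hl]; apply/cvg_ex; exists l; exact: cvg_dnbhs_at_right.
near=> h; apply: hB; apply/andP; split; near: h;
  [exact: nbhs_right_gt | exact: nbhs_right_lt].
Unshelve. all: end_near.
Qed.

Lemma derive_le_chord (f : V -> R) (a s : V) : derivable f a (s - a) ->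
  (forall h : R, 0 < h < 1 -> f (h *: (s - a) + a) <= (1 - h) * f a + h * f s) ->
  'D_(s - a) f a <= f s - f a.
Proof.
move=> df chord; apply: derive_le_quotient => // h h01.
have /andP[h_gt0 _] := h01; rewrite ler_pdivrMl //.
have -> : h * (f s - f a) = (1 - h) * f a + h * f s - f a by ring.
by rewrite lerD2r chord.
Qed.

End directional_derivative.

Lemma derive_pair {R : realType} (f : R * R -> R) (a v : R * R) :
  differentiable f a ->
  'D_v f a = v.1 * 'D_(1, 0) f a + v.2 * 'D_(0, 1) f a.
Proof.
move=> df; rewrite !deriveE //.
have hv : v = v.1 *: ((1, 0) : R * R) + v.2 *: ((0, 1) : R * R).
  by case: v => x y; congr (_, _); cbn; rewrite mulr1 mulr0 ?addr0 ?add0r.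
by rewrite [in LHS]hv raddfD /= !linearZ.
Qed.

Section tilted_density.
Context {R : realType} (p q : R).

Definition normc : R := 2 * p `^ p^-1 * Gamma_fn (1 + p^-1).

Definition tilted (a b y : R) : R :=
  expR (a * `|y| `^ q + b * `|y| `^ p) / normc.

Lemma mgf_tilted (s : R * R) :
  mgf_p p q s = (\int[mu]_y (tilted s.1 (s.2 - p^-1) y)%:E)%E.
Proof.
apply: eq_integral => y _; congr (_%:E).
by rewrite /f_p /tilted mulrA -expRD; congr (expR _ / _); ring.
Qed.

Lemma normc_ge0 : 0 <= normc.
Proof.
rewrite /normc !mulr_ge0 ?powR_ge0 // /Gamma_fn /Rintegral fine_ge0 //.
by apply: integral_ge0 => t _; rewrite lee_fin mulr_ge0 ?powR_ge0 ?expR_ge0.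
Qed.

Lemma tilted_ge0 (a b y : R) : 0 <= tilted a b y.
Proof. by rewrite /tilted divr_ge0 ?expR_ge0 ?normc_ge0. Qed.

Lemma measurable_tilted (a b : R) : measurable_fun [set: R] (tilted a b).
Proof.
have mpow r : measurable_fun [set: R] (fun y : R => `|y| `^ r).
  by apply: (measurableT_comp (measurable_powR r)); exact: normr_measurable.
apply: measurable_funM; last exact: measurable_cst.
apply: measurableT_comp; first exact: measurable_expR.
by apply: measurable_funD; apply: measurable_funM => //; exact: measurable_cst.
Qed.

Lemma mgf_ge0 (s : R * R) : (0 <= mgf_p p q s)%E.
Proof.
by rewrite mgf_tilted; apply: integral_ge0 => y _; rewrite lee_fin tilted_ge0.
Qed.

Lemma mgf_le (s r : R * R) : s.1 <= r.1 -> s.2 <= r.2 ->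
  (mgf_p p q s <= mgf_p p q r)%E.
Proof.
move=> le1 le2; rewrite !mgf_tilted; apply: ge0_le_integral => //.
- by move=> y _; rewrite lee_fin tilted_ge0.
- by apply/measurable_EFinP; exact: measurable_tilted.
- by apply/measurable_EFinP; exact: measurable_tilted.
move=> y _; rewrite lee_fin /tilted ler_wpM2r ?invr_ge0 ?normc_ge0 // ler_expR.
have := powR_ge0 `|y| q; have := powR_ge0 `|y| p; nra.
Qed.

Lemma tilted_dilation (a b l y : R) : 0 < l ->
  tilted a b (l * y) = tilted (a * l `^ q) (b * l `^ p) y.
Proof.
move=> l_gt0; rewrite /tilted normrM (gtr0_norm l_gt0).
by rewrite !powRM ?normr_ge0 ?(ltW l_gt0) //; congr (expR _ / _); ring.
Qed.

(* The action on parameters tau induced by the dilation y |-> l y. *)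
Definition dilate_tau (l : R) (s : R * R) : R * R :=
  (s.1 * l `^ q, (s.2 - p^-1) * l `^ p + p^-1).

Lemma mgf_dilation (l : R) (s : R * R) : 0 < l ->
  mgf_p p q (dilate_tau l s) = ((l^-1)%:E * mgf_p p q s)%E.
Proof.
move=> l_gt0; rewrite !mgf_tilted /= addrK.
transitivity (\int[mu]_y (tilted s.1 (s.2 - p^-1) (l * y))%:E)%E.
  by apply: eq_integral => y _; rewrite tilted_dilation.
apply: ge0_integral_dilation => //; first exact: measurable_tilted.
exact: tilted_ge0.
Qed.

(* Pointwise form of the log-convexity of the mgf: with the weights coming
   from expR_interpolation, the integrand at h *: (s - t) + t is dominated
   by a combination of the integrands at t and at s. *)
Lemma tilted_interpolation (a b h : R) (t s : R * R) (y : R) :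
  0 < a -> 0 < b -> 0 <= h <= 1 ->
  tilted (h *: (s - t) + t).1 ((h *: (s - t) + t).2 - p^-1) y <=
  expR ((1 - h) * ln a + h * ln b) * (1 - h) / a * tilted t.1 (t.2 - p^-1) y
  + expR ((1 - h) * ln a + h * ln b) * h / b * tilted s.1 (s.2 - p^-1) y.
Proof.
move=> a_gt0 b_gt0 h01; rewrite /tilted.
set E := expR ((1 - h) * ln a + h * ln b).
set A := t.1 * _ + _; set B := s.1 * _ + _.
have -> : (h *: (s - t) + t).1 * `|y| `^ q
    + ((h *: (s - t) + t).2 - p^-1) * `|y| `^ p = (1 - h) * A + h * B.
  by rewrite pairZD /A /B /=; ring.
have -> : E * (1 - h) / a * (expR A / normc) + E * h / b * (expR B / normc) =
    E * ((1 - h) * expR A / a + h * expR B / b) / normc by ring.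
by rewrite ler_wpM2r ?invr_ge0 ?normc_ge0 // expR_interpolation.
Qed.

(* The moment generating function is log-convex along segments: integrate
   tilted_interpolation and use the normalisations mgf t = a, mgf s = b. *)
Lemma mgf_log_convex (a b h : R) (t s : R * R) :
  0 < a -> 0 < b -> 0 <= h <= 1 -> mgf_p p q t = a%:E -> mgf_p p q s = b%:E ->
  (mgf_p p q (h *: (s - t) + t)%R <= (expR ((1 - h) * ln a + h * ln b))%:E)%E.
Proof.
move=> a_gt0 b_gt0 h01; rewrite !mgf_tilted => ht hs.
set E := expR _; have E_gt0 : 0 < E by exact: expR_gt0.
have /andP[h0 h1] := h01; rewrite -subr_ge0 in h1.
set Gt := tilted t.1 (t.2 - p^-1); set Gs := tilted s.1 (s.2 - p^-1).
have mGt : measurable_fun [set: R] (EFin \o Gt).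
  by apply/measurable_EFinP; exact: measurable_tilted.
have mGs : measurable_fun [set: R] (EFin \o Gs).
  by apply/measurable_EFinP; exact: measurable_tilted.
have ca : 0 <= E * (1 - h) / a.
  by rewrite divr_ge0 ?mulr_ge0 ?(ltW E_gt0) ?(ltW a_gt0).
have cb : 0 <= E * h / b by rewrite divr_ge0 ?mulr_ge0 ?(ltW E_gt0) ?(ltW b_gt0).
apply: (@le_trans _ _ (\int[mu]_y ((E * (1 - h) / a)%:E * (Gt y)%:E
                                 + (E * h / b)%:E * (Gs y)%:E))%E).
  apply: ge0_le_integral => //.
  - by move=> y _; rewrite lee_fin tilted_ge0.
  - by apply/measurable_EFinP; exact: measurable_tilted.
  - by apply: emeasurable_funD; apply: emeasurable_funM => //;
      exact: measurable_cst.
  by move=> y _; rewrite -!EFinM -EFinD lee_fin; exact: tilted_interpolation.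
rewrite ge0_integralD //; last 4 first.
- by move=> y _; rewrite mule_ge0 ?lee_fin ?tilted_ge0.
- by apply: emeasurable_funM => //; exact: measurable_cst.
- by move=> y _; rewrite mule_ge0 ?lee_fin ?tilted_ge0.
- by apply: emeasurable_funM => //; exact: measurable_cst.
rewrite !ge0_integralZl //; try by move=> y _; rewrite lee_fin tilted_ge0.
rewrite ht hs -!EFinM -EFinD lee_fin !divfK ?gt_eqF //.
by rewrite -mulrDr subrK mulr1.
Qed.

Hypotheses (p_gt0 : 0 < p) (q_gt0 : 0 < q) (normc_gt0 : 0 < normc).

(* The integrand is bounded below on [0, 1] by a positive constant. *)
Lemma mgf_gt0 (s : R * R) : (0 < mgf_p p q s)%E.
Proof.
rewrite mgf_tilted; set a := s.1; set b := s.2 - p^-1.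
pose c := expR (- (`|a| + `|b|)) / normc.
have c_gt0 : 0 < c by rewrite divr_gt0 ?expR_gt0.
apply: (@lt_le_trans _ _ (c%:E * mu `[0%R, 1%R]%classic)%E).
  rewrite lebesgue_measure_itv /= lte_fin ltr01 -EFinD subr0 -EFinM.
  by rewrite lte_fin mulr1.
rewrite -integral_cst //.
apply: (@le_trans _ _ (\int[mu]_(y in `[0%R, 1%R]%classic) (tilted a b y)%:E)%E).
  apply: ge0_le_integral => //.
  - by move=> y _; rewrite lee_fin ltW.
  - by apply/measurable_EFinP; apply: measurable_funTS; exact: measurable_tilted.
  move=> y; rewrite /= in_itv /= => /andP[y0 y1].
  rewrite lee_fin /c /tilted ler_wpM2r ?invr_ge0 ?normc_ge0 // ler_expR.
  have y01 : 0 <= `|y| <= 1 by rewrite normr_ge0 ger0_norm.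
  have := powR_ge0 `|y| q; have := powR_ge0 `|y| p.
  have := powR_le1 _ _ y01 (ltW q_gt0); have := powR_le1 _ _ y01 (ltW p_gt0).
  have := ler_norm a; have := ler_norm b.
  have := ler_norm (- a); have := ler_norm (- b); rewrite !normrN; nra.
apply: ge0_subset_integral => //.
- by apply/measurable_EFinP; exact: measurable_tilted.
- by move=> y _; rewrite lee_fin tilted_ge0.
Qed.

End tilted_density.

Section cumulant.
Context {R : realType} (p q : R).

Lemma Lambda_fin {s : R * R} {b : R} :
  mgf_p p q s = b%:E -> Lambda_p p q s = (ln b)%:E.
Proof. by move=> h; rewrite /Lambda_p h. Qed.

Lemma Lambda_infty {s : R * R} :
  mgf_p p q s \isn't a fin_num -> Lambda_p p q s = +oo%E.
Proof. by move=> h; rewrite /Lambda_p (negbTE h). Qed.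

(* If the normalising constant vanished, Lambda_p_real would be identically
   zero, so no gradient could have a positive second coordinate. *)
Lemma normc_gt0_of_grad (t x : R * R) :
  grad_Lambda_p_eq p q t x -> 0 < x.2 -> 0 < normc p.
Proof.
move=> [dif [_ d2]] x2_gt0; rewrite lt_def normc_ge0 // andbT.
apply/negP => /eqP normc0.
have Lambda0 s : Lambda_p_real p q s = 0.
  rewrite /Lambda_p_real (@Lambda_fin s 0) ?ln0 // mgf_tilted.
  by under eq_integral do rewrite /tilted normc0 invr0 mulr0; rewrite integral0.
have : 'D_(0, 1) (Lambda_p_real p q) t <= 0.
  apply: derive_le_quotient; first exact: diff_derivable.
  by move=> h _; rewrite !Lambda0 subrr mulr0.
by rewrite d2 leNgt x2_gt0.
Qed.

(* If the mgf were infinite at t, it would stay infinite above t, so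
   Lambda_p_real would be flat (zero) there in the direction (0, 1). *)
Lemma mgf_fin_of_grad (t x : R * R) :
  grad_Lambda_p_eq p q t x -> 0 < x.2 -> mgf_p p q t \is a fin_num.
Proof.
move=> [dif [_ d2]] x2_gt0; apply/negP => mgf_nfin.
have mgf_oo : mgf_p p q t = +oo%E.
  by move: mgf_nfin (mgf_ge0 p q t); case: (mgf_p p q t).
have Lambda0 s : (mgf_p p q t <= mgf_p p q s)%E -> Lambda_p_real p q s = 0.
  rewrite mgf_oo leye_eq => /eqP mgf_s_oo.
  by rewrite /Lambda_p_real Lambda_infty // mgf_s_oo.
have : 'D_(0, 1) (Lambda_p_real p q) t <= 0.
  apply: derive_le_quotient; first exact: diff_derivable.
  move=> h /andP[h_gt0 _]; rewrite !Lambda0 ?subrr ?mulr0 //.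
  by apply: mgf_le => //; rewrite pairZD /= ?mulr0 ?add0r // mulr1 lerDr ltW.
by rewrite d2 leNgt x2_gt0.
Qed.

Hypotheses (p_gt0 : 0 < p) (q_gt0 : 0 < q) (normc_gt0 : 0 < normc p).

Let mgf_pos : forall s, (0 < mgf_p p q s)%E := mgf_gt0 p q p_gt0 q_gt0 normc_gt0.

Lemma Lambda_dilation (l : R) (s : R * R) : 0 < l ->
  Lambda_p p q (dilate_tau p q l s) = (Lambda_p p q s - (ln l)%:E)%E.
Proof.
move=> l_gt0; rewrite /Lambda_p mgf_dilation //.
have := mgf_pos s.
case: (mgf_p p q s) => [r| |] //= r_gt0.
  by rewrite lnM ?posrE ?invr_gt0 // lnV ?posrE // -EFinD addrC.
by rewrite mulry gtr0_sg ?invr_gt0 // mul1e.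
Qed.

(* Log-convexity of the mgf makes Lambda_p_real convex on segments between
   points where the mgf is finite. *)
Lemma Lambda_real_chord (t s : R * R) (a b h : R) :
  mgf_p p q t = a%:E -> mgf_p p q s = b%:E -> 0 < h < 1 ->
  Lambda_p_real p q (h *: (s - t) + t) <=
  (1 - h) * Lambda_p_real p q t + h * Lambda_p_real p q s.
Proof.
move=> ht hs /andP[h_gt0 h_lt1].
have a_gt0 : 0 < a by rewrite -lte_fin -ht mgf_pos.
have b_gt0 : 0 < b by rewrite -lte_fin -hs mgf_pos.
have h01 : 0 <= h <= 1 by rewrite !ltW.
move: (mgf_log_convex p q a b h t s a_gt0 b_gt0 h01 ht hs)
  (mgf_pos (h *: (s - t) + t)).
case E : (mgf_p p q (h *: (s - t) + t)) => [c| |] //=; rewrite !lte_fin lee_fin.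
move=> c_le c_gt0.
rewrite /Lambda_p_real (Lambda_fin E) (Lambda_fin ht) (Lambda_fin hs) /=.
by rewrite -[leRHS]expRK ler_ln ?posrE ?expR_gt0.
Qed.

(* At a point t where the gradient of Lambda_p is x, the supremum defining
   Lambda_p^*(x) is attained at t (tangent-plane inequality for convex
   functions). *)
Lemma Lambda_star_grad (t x : R * R) (a : R) :
  grad_Lambda_p_eq p q t x -> mgf_p p q t = a%:E ->
  Lambda_p_star p q x = (x.1 * t.1 + x.2 * t.2 - ln a)%:E.
Proof.
move=> [dif [d1 d2]] ht; apply/le_anti/andP; split; last first.
  by apply: ereal_sup_ubound; exists t => //; rewrite (Lambda_fin ht) -EFinB.
apply: ge_ereal_sup => _ [s _ <-].
have [s_fin|s_nfin] := boolP (mgf_p p q s \is a fin_num); last first.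
  by rewrite Lambda_infty // leNye.
have [b hs] : exists b, mgf_p p q s = b%:E.
  by exists (fine (mgf_p p q s)); rewrite fineK.
rewrite (Lambda_fin hs) -EFinB lee_fin.
have : 'D_(s - t) (Lambda_p_real p q) t <=
    Lambda_p_real p q s - Lambda_p_real p q t.
  apply: derive_le_chord; first exact: diff_derivable.
  by move=> h h01; exact: Lambda_real_chord ht hs h01.
rewrite derive_pair // d1 d2 /Lambda_p_real (Lambda_fin hs) (Lambda_fin ht) /=.
move=> D; rewrite -subr_ge0.
have -> : x.1 * t.1 + x.2 * t.2 - ln a - (x.1 * s.1 + x.2 * s.2 - ln b) =
    ln b - ln a - ((s.1 - t.1) * x.1 + (s.2 - t.2) * x.2) by ring.
by rewrite subr_ge0.
Qed.

Lemma Lambda_star_dilation (l : R) (x : R * R) : 0 < l ->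
  (Lambda_p_star p q (x.1 * l `^ q, x.2 * l `^ p)%R +
     ((x.2 - x.2 * l `^ p) / p + ln l)%:E <= Lambda_p_star p q x)%E.
Proof.
move=> l_gt0; set d := (x.2 - x.2 * l `^ p) / p + ln l.
rewrite -[leRHS](@subeK _ _ d%:E) // leeD2rE //.
apply: ge_ereal_sup => _ [r _ <-].
set r' := dilate_tau p q l r.
apply: (@le_trans _ _
  (((x.1 * r'.1 + x.2 * r'.2)%:E - Lambda_p p q r') - d%:E)%E).
  rewrite Lambda_dilation // /Lambda_p; case: ifP => _ //=.
  by rewrite -!EFinD lee_fin /d le_eqVlt; apply/orP; left; apply/eqP; ring.
by rewrite leeD2rE //; apply: ereal_sup_ubound; exists r'.
Qed.

(* On the constraint curve, Lambda_p^* differs from its value at z* = (z^q, 1)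
   by the nonnegative gap (t.2 - 1 - ln t.2) / p: apply Lambda_star_dilation
   with l = t.2^(-1/p) (from t to z* ) and l = t.2^(1/p) (from z* to t). *)
Lemma Lambda_star_constr (z : R) (t : R * R) : constr_set p q z t ->
  Lambda_p_star p q t =
    (Lambda_p_star p q (z `^ q, 1)%R + ((t.2 - 1 - ln t.2) / p)%:E)%E.
Proof.
case: t => t1 t2 [/= t1_gt0 [t2_gt0 ht]].
set gap := (t2 - 1 - ln t2) / p.
have down := Lambda_star_dilation _ (t1, t2)
  (powR_gt0 (- p^-1) t2_gt0).
have down1 : t2 * (t2 `^ (- p^-1)) `^ p = 1.
  by rewrite -powRrM mulNr mulVf ?gt_eqF // powR_inv1 ?ltW // mulfV ?gt_eqF.
have down2 : t1 * (t2 `^ (- p^-1)) `^ q = z `^ q.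
  by rewrite -ht powRM ?powR_ge0 // powR_invrK // ltW.
have down_gap : (t2 - 1) / p + ln (t2 `^ (- p^-1)) = gap.
  by rewrite ln_powR /gap; ring.
rewrite /= down1 down2 down_gap in down.
have up := Lambda_star_dilation _ (z `^ q, 1)
  (powR_gt0 (p^-1) t2_gt0).
have up1 : 1 * (t2 `^ p^-1) `^ p = t2 by rewrite mul1r powR_invrK // ltW.
have up2 : z `^ q * (t2 `^ p^-1) `^ q = t1.
  rewrite -ht -powRM ?mulr_ge0 ?powR_ge0 // -mulrA -powRD; last first.
    by rewrite addNr eqxx /= gt_eqF.
  by rewrite addNr powRr0 mulr1 powR_invrK // ltW.
have up_gap : (1 - t2) / p + ln (t2 `^ p^-1) = - gap.
  by rewrite ln_powR /gap; ring.
rewrite /= up1 up2 up_gap in up.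
apply/le_anti/andP; split => //.
by have := leeD2r gap%:E up; rewrite -addeA -EFinD addNr adde0.
Qed.

End cumulant.



Theorem lemma2p4 (R : realType) (p q z : R) :
  1 <= q -> q < p -> m_pq p q < z ->
  J_p p q (z `^ q, 1) ->
  ereal_inf [set Lambda_p_star p q t | t in constr_set p q z]
    = Lambda_p_star p q (z `^ q, 1) /\
  constr_set p q z (z `^ q, 1) /\
  (forall t, constr_set p q z t ->
     Lambda_p_star p q t = Lambda_p_star p q (z `^ q, 1) -> t = (z `^ q, 1)).
Proof.
move=> q_ge1 q_lt_p mz [tau [_ grad]].
have q_gt0 : 0 < q by exact: lt_le_trans ltr01 q_ge1.
have p_gt0 : 0 < p by exact: lt_trans q_gt0 q_lt_p.
have z_gt0 : 0 < z by apply: le_lt_trans mz; exact: powR_ge0.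
have normc_gt0 := normc_gt0_of_grad p q tau _ grad ltr01.
have [a mgf_tau] : exists a, mgf_p p q tau = a%:E.
  exists (fine (mgf_p p q tau)).
  by rewrite fineK // (mgf_fin_of_grad p q tau _ grad ltr01).
have star_fin := Lambda_star_grad p q p_gt0 q_gt0 normc_gt0 tau _ a grad mgf_tau.
have on_curve := Lambda_star_constr p q p_gt0 q_gt0 normc_gt0 z.
have z_on_curve : constr_set p q z (z `^ q, 1).
  split; first exact: powR_gt0.
  split; first exact: ltr01.
  by rewrite /= -powRrM mulfV ?gt_eqF // powRr1 ?ltW // powR1 mulr1.
have gap_ge0 t : constr_set p q z t -> 0 <= (t.2 - 1 - ln t.2) / p.
  by case=> _ [t2_gt0 _]; rewrite divr_ge0 ?subr_ge0 ?ln_le_subr1 ?ltW.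
split; [|split=> //].
  apply/le_anti/andP; split; first by apply: ereal_inf_lbound; exists (z `^ q, 1).
  apply/ereal_infP => _ [t ht <-].
  by rewrite (on_curve _ ht) leeDl // lee_fin gap_ge0.
move=> [t1 t2] ht; rewrite (on_curve _ ht) star_fin.
case: ht => /= t1_gt0 [t2_gt0 ht].
rewrite -EFinD => -[] /eqP; rewrite -subr_eq0 addrAC subrr add0r mulf_eq0.
rewrite invr_eq0 (gt_eqF p_gt0) orbF subr_eq0 => /eqP ln_t2.
have t2_1 : t2 = 1 by apply: ln_eq_subr1 => //; exact/esym.
move: ht; rewrite t2_1 powR1 mulr1 => <-.
by rewrite powR_invrK // ltW.
Qed.
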